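(* For every $n\ge 3$, let $G_n$ be the directed graph with nodes $0,1,\dots,n-1$ and arcs $i\to i+1$ for $0\le i\le n-2$ together with $j\to 1$ for $2\le j\le n-1$. Then $R(G_n)=1$.
   Context: $d_G(x,y)$ is the shortest directed path length from $x$ to $y$ ($\infty$ if none). The distance-count matrix $C_G\in\mathbb{R}^{n\times n}$ of a graph with $n$ nodes has $(C_G)_{i,k}=|\{j: d_G(j,i)=k\}|$. For $\mathbf a\in\mathbb{R}^{\mathbb{N}}$ (with $a_0$ arbitrary) the linear centrality is $f^{\mathbf a}_G(i)=\sum_{k=0}^{n-1}(C_G)_{i,k}a_k$. A permutation $\pi$ of $\{0,\dots,n-1\}$ is representable by $G$ if there is $\mathbf a\in\mathbb{R}^{\mathbb{N}}$ such that $f^{\mathbf a}_G(\pi(0))>f^{\mathbf a}_G(\pi(1))>\dots>f^{\mathbf a}_G(\pi(n-1))$. The representativeness of $G$ is $R(G)=|\{\pi\in S_n:\pi\text{ representable by }G\}|/n!$. *)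

From HB Require Import structures.
From mathcomp Require Import all_boot all_order all_algebra all_fingroup.
From mathcomp Require Import boolp.
From mathcomp Require Import Rstruct.
From Stdlib Require Import Reals.
Set Implicit Arguments. Unset Strict Implicit. Unset Printing Implicit Defensive.
Import Order.TTheory GRing.Theory Num.Theory.
Local Open Scope ring_scope.

Definition walk_len {n : nat} (e : rel 'I_n) (k : nat) (x y : 'I_n) : bool :=
  [exists p : k.-tuple 'I_n, path e x p && (last x p == y)].

Definition dist_eq {n : nat} (e : rel 'I_n) (x y : 'I_n) (k : nat) : bool :=
  walk_len e k x y && [forall j : 'I_k, ~~ walk_len e j x y].

Definition dcount {n : nat} (e : rel 'I_n) (i : 'I_n) (k : nat) : nat :=
  #|[set j : 'I_n | dist_eq e j i k]|.

Definition lin_centrality {n : nat} (e : rel 'I_n) (a : nat -> R) (i : 'I_n) : R :=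
  \sum_(k < n) (dcount e i k)%:R * a k.

Definition representable {n : nat} (e : rel 'I_n) (pi : 'S_n) : Prop :=
  exists a : nat -> R, forall i j : 'I_n, nat_of_ord j = (nat_of_ord i).+1 ->
    lin_centrality e a (pi j) < lin_centrality e a (pi i).

Definition representativeness {n : nat} (e : rel 'I_n) : rat :=
  (#|[set pi : 'S_n | `[< representable e pi >]]|)%:R / (n`!)%:R.

Definition Gn (n : nat) : rel 'I_n :=
  fun i j => ((nat_of_ord j == (nat_of_ord i).+1)
             || (leq 2 (nat_of_ord i) && (nat_of_ord j == 1)))%N.
Arguments Gn n : clear implicits.

From mathcomp Require Import all_boot all_algebra.
From HB Require Import structures.
From mathcomp Require Import all_order all_fingroup boolp zify.
From mathcomp Require Import Rstruct.
From Stdlib Require Rdefinitions.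
Set Implicit Arguments. Unset Strict Implicit. Unset Printing Implicit Defensive.
Import Order.TTheory GRing.Theory Num.Theory.

Local Notation R := Rdefinitions.R.

(** In G_n every arc raises the index by at most one and never enters node 0.
    Hence node 0 lies at distance exactly x from node x, while every node
    reaches x > 0 in at most x steps (through the arc to 1 if needed).  So the
    distance-count matrix is lower triangular with a positive diagonal, and
    the weights a_0, a_1, ... can be chosen one after the other to give the
    nodes any prescribed centralities, in particular any strict ordering. *)

Section Walks.
Variables (n : nat) (e : rel 'I_n).

Lemma walk_len_refl x : walk_len e 0 x x.
Proof. by apply/existsP; exists (in_tuple [::]) => /=. Qed.

Lemma walk_len_cons k x y z : e x y -> walk_len e k y z -> walk_len e k.+1 x z.
Proof.
move=> exy /existsP [p /andP [ep lastp]]; apply/existsP; exists (cons_tuple y p).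
by rewrite /= exy ep.
Qed.

Lemma walk_len_dist_eqF m k x y :
  walk_len e m x y -> (m < k)%N -> dist_eq e x y k = false.
Proof.
move=> wm ltmk; apply/negbTE; rewrite negb_and; apply/orP; right.
by apply/forallP => /(_ (Ordinal ltmk)); rewrite wm.
Qed.

End Walks.

Section TriangularDistanceCounts.
Variables (n : nat) (e : rel 'I_n).
Hypothesis dcount_gt : forall (x : 'I_n) k, (x < k)%N -> dcount e x k = 0%N.
Hypothesis dcount_diag_gt0 : forall x : 'I_n, (0 < dcount e x x)%N.

Local Open Scope ring_scope.

Lemma lin_centrality_triangular (a : nat -> R) (x : 'I_n) :
  lin_centrality e a x =
  \sum_(k < x) (dcount e x k)%:R * a k + (dcount e x x)%:R * a x.
Proof.
rewrite /lin_centrality -(big_mkord xpredT (fun k => (dcount e x k)%:R * a k)).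
rewrite (@big_cat_nat _ _ _ x.+1) //= big_nat_recr //= big_mkord.
rewrite [X in _ + X]big_nat_cond [X in _ + X]big1 ?addr0 // => k.
by case/andP => /andP [ltxk _] _; rewrite dcount_gt // mul0r.
Qed.

Lemma eq_lin_centrality (a b : nat -> R) (x : 'I_n) :
  (forall k, (k <= x)%N -> a k = b k) ->
  lin_centrality e a x = lin_centrality e b x.
Proof.
move=> eq_ab; rewrite !lin_centrality_triangular eq_ab //; congr (_ + _).
by apply: eq_bigr => k _; rewrite eq_ab // ltnW.
Qed.

Lemma lin_centrality_onto_prefix (v : 'I_n -> R) N : (N <= n)%N ->
  exists a : nat -> R, forall x : 'I_n, (x < N)%N -> lin_centrality e a x = v x.
Proof.
elim: N => [|N IH] ltNn; first by exists (fun=> 0).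
have [a Ha] := IH (ltnW ltNn); pose xN : 'I_n := Ordinal ltNn.
pose c k : R := (dcount e xN k)%:R.
pose b k := if k == N then (v xN - \sum_(k < N) c k * a k) / c N else a k.
have eq_ab k : (k < N)%N -> b k = a k by move=> ltkN; rewrite /b ltn_eqF.
exists b => x; rewrite ltnS leq_eqVlt => /orP [/eqP eqxN | ltxN]; last first.
  by rewrite -Ha //; apply: eq_lin_centrality => k lekx; apply/eq_ab/(leq_ltn_trans lekx).
have -> : x = xN by apply/val_inj.
rewrite lin_centrality_triangular /b /= eqxx.
under eq_bigr => k _ do rewrite ltn_eqF ?ltn_ord //.
have cN_neq0 : c N != 0 by rewrite pnatr_eq0 -lt0n; exact: dcount_diag_gt0.
by rewrite -/(c N) mulrC divfK // addrC subrK.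
Qed.

Lemma lin_centrality_onto (v : 'I_n -> R) :
  exists a : nat -> R, lin_centrality e a =1 v.
Proof.
have [a Ha] := lin_centrality_onto_prefix v (leqnn n).
exists a => x; exact: Ha (ltn_ord x).
Qed.

Lemma representable_triangular (pi : 'S_n) : representable e pi.
Proof.
have [a Ha] := lin_centrality_onto (fun x => - ((pi^-1)%g x)%:R).
by exists a => i j eq_ji; rewrite !Ha !permK ltrN2 ltr_nat eq_ji.
Qed.

Lemma representativeness_triangular : representativeness e = 1.
Proof.
rewrite /representativeness.
have -> : [set pi : 'S_n | `[< representable e pi >]] = setT.
  by apply/setP => pi; rewrite !inE; apply/asboolP/representable_triangular.
by rewrite cardsT card_Sn divff // pnatr_eq0 -lt0n fact_gt0.
Qed.

End TriangularDistanceCounts.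

Section GnGraph.
Variable n : nat.

Lemma Gn_arc_leS (x y : 'I_n) : Gn n x y -> (y <= x.+1)%N.
Proof. by case/orP => [/eqP -> | /andP [le2x /eqP ->]] //; lia. Qed.

Lemma Gn_arc_gt0 (x y : 'I_n) : Gn n x y -> (0 < y)%N.
Proof. by case/orP => [/eqP -> | /andP [_ /eqP ->]]. Qed.

Lemma Gn_path_last_le (x : 'I_n) p : path (Gn n) x p -> (last x p <= x + size p)%N.
Proof.
elim: p x => [|y p IH] x /=; first by rewrite addn0.
by case/andP => /Gn_arc_leS lexy /IH; lia.
Qed.

Lemma Gn_path_last_gt0 (x : 'I_n) p : path (Gn n) x p -> p != [::] -> (0 < last x p)%N.
Proof.
elim: p x => [|y p IH] x //= /andP [/Gn_arc_gt0 gt0y yp] _.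
by case: p IH yp => [|z p] IH yp //; apply: IH.
Qed.

Lemma Gn_walk_len_up d (j x : 'I_n) : (j + d)%N = x -> walk_len (Gn n) d j x.
Proof.
elim: d j => [|d IH] j eqjx.
  have -> : j = x by apply/val_inj; rewrite /= -eqjx addn0.
  exact: walk_len_refl.
have ltSjn : (j.+1 < n)%N by have := ltn_ord x; lia.
apply: (@walk_len_cons _ _ _ _ (Ordinal ltSjn)); first by rewrite /Gn /= eqxx.
by apply: IH => /=; lia.
Qed.

Lemma Gn_walk_len_le (j x : 'I_n) :
  (0 < x)%N -> exists2 m, (m <= x)%N & walk_len (Gn n) m j x.
Proof.
move=> gt0x; case: (leqP j x) => ltjx.
  by exists (x - j)%N; [exact: leq_subr | apply: Gn_walk_len_up; lia].
have lt1n : (1 < n)%N by have := ltn_ord x; lia.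
exists x => //; have -> : x = (x - 1).+1 :> nat by lia.
apply: (@walk_len_cons _ _ _ _ (Ordinal lt1n)).
  by rewrite /Gn /= eqxx andbT orbC; lia.
by apply: Gn_walk_len_up => /=; lia.
Qed.

Lemma dcount_Gn_gt (x : 'I_n) k : (x < k)%N -> dcount (Gn n) x k = 0%N.
Proof.
move=> ltxk; apply/eqP; rewrite cards_eq0; apply/eqP/setP => j.
rewrite inE in_set0; case: (posnP x) => [x0 | gt0x]; last first.
  by have [m lemx wm] := Gn_walk_len_le j gt0x; apply: walk_len_dist_eqF wm _; lia.
apply/negbTE; rewrite negb_and; apply/orP; left.
apply/existsP => -[p /andP [jp /eqP lastp]].
have p_neq0 : (p : seq _) != [::] by rewrite -size_eq0 size_tuple; lia.
by have := Gn_path_last_gt0 jp p_neq0; rewrite lastp x0.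
Qed.

Lemma dcount_Gn_diag_gt0 (x : 'I_n) : (0 < dcount (Gn n) x x)%N.
Proof.
have gt0n : (0 < n)%N by have := ltn_ord x; lia.
rewrite card_gt0; apply/set0Pn; exists (Ordinal gt0n).
rewrite inE /dist_eq Gn_walk_len_up //=.
apply/forallP => m; apply/negP => /existsP [p /andP [zp /eqP lastp]].
by have := Gn_path_last_le zp; rewrite lastp size_tuple /=; have := ltn_ord m; lia.
Qed.

End GnGraph.

Theorem theorem5 (n : nat) : (3 <= n)%N -> representativeness (Gn n) = 1%R.
Proof.
(* The triangular structure holds for every n. *)
move=> _.
exact: representativeness_triangular (@dcount_Gn_gt n) (@dcount_Gn_diag_gt0 n).
Qed.
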